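(* There is an absolute constant $c>0$ such that for every instance $I$ of continuous BGT, the schedule produced by Algorithm 1 satisfies $\mathrm{MH}\le c\cdot \frac{h_{\max}}{h_{\min}}\cdot\mathrm{OPT}(I)$. (Algorithm 1: compute a minimum spanning tree $T$ of $V$ with respect to the travel times, and let the robot, starting at $v_1$, repeatedly traverse a closed Euler tour of $T$, i.e. a closed walk starting and ending at $v_1$ that traverses every edge of $T$ exactly twice; bamboos are cut whenever the robot is at their point.)
   Context: Continuous BGT: bamboos at points $V=\{v_1,\dots,v_n\}$, $n\ge2$, growth rates $h_1\ge\dots\ge h_n>0$ with $h_1>h_n$, initial heights $0$; symmetric travel times $t_{i,j}>0$ ($i\ne j$) satisfying the triangle inequality. A robot starts at $v_1$ at time $0$, travels between points with time $t_{i,j}$ from $v_i$ to $v_j$, and cuts the bamboo at every point it is at, instantaneously, to height $0$. Height of $b_i$ at time $t$ is $h_i$ times time elapsed since its last cut (or since $0$). $\mathrm{MH}$ of a schedule is the supremum of all heights over all times; $\mathrm{OPT}(I)$ is the infimum of $\mathrm{MH}$ over all robot walks. $h_{\max}=h_1$, $h_{\min}=h_n$. *)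

From Stdlib Require Import Reals List Arith.
From Coquelicot Require Import Coquelicot.
Import ListNotations.
Open Scope R_scope.

(* Points v_1..v_n are indexed 0..n-1 (v_1 = index 0).
   h i = growth rate of bamboo i, t i j = travel time from v_i to v_j. *)

Definition valid_instance (n : nat) (h : nat -> R) (t : nat -> nat -> R) : Prop :=
  (2 <= n)%nat /\
  (forall i j, (i <= j)%nat -> (j < n)%nat -> h j <= h i) /\
  0 < h (n - 1)%nat /\
  h (n - 1)%nat < h 0%nat /\
  (forall i j, (i < n)%nat -> (j < n)%nat -> i <> j -> 0 < t i j) /\
  (forall i j, (i < n)%nat -> (j < n)%nat -> i <> j -> t i j = t j i) /\
  (forall i j k, (i < n)%nat -> (j < n)%nat -> (k < n)%nat ->
     i <> j -> j <> k -> i <> k -> t i k <= t i j + t j k).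

(* A robot walk: the k-th stop is point w k, reached at time a k and left at
   time d k (a k <= d k: the robot may wait); travelling from w k to w (k+1)
   takes exactly t (w k) (w (k+1)). *)
Definition valid_walk (n : nat) (t : nat -> nat -> R)
  (w : nat -> nat) (a d : nat -> R) : Prop :=
  w 0%nat = 0%nat /\ a 0%nat = 0 /\
  (forall k, (w k < n)%nat) /\
  (forall k, w (S k) <> w k) /\
  (forall k, a k <= d k) /\
  (forall k, a (S k) = d k + t (w k) (w (S k))).

Definition at_point (w : nat -> nat) (a d : nat -> R) (i : nat) (s : R) : Prop :=
  exists k, w k = i /\ a k <= s <= d k.

(* time of the last cut of bamboo i up to time tau (0 if never cut) *)
Definition last_cut (w : nat -> nat) (a d : nat -> R) (i : nat) (tau : R) : R :=
  real (Lub_Rbar (fun s => s = 0 \/ (0 <= s <= tau /\ at_point w a d i s))).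

Definition height (h : nat -> R) (w : nat -> nat) (a d : nat -> R)
  (i : nat) (tau : R) : R :=
  h i * (tau - last_cut w a d i tau).

Definition MH (n : nat) (h : nat -> R) (w : nat -> nat) (a d : nat -> R) : Rbar :=
  Lub_Rbar (fun x => exists i tau, (i < n)%nat /\ 0 <= tau /\ x = height h w a d i tau).

Definition OPT (n : nat) (h : nat -> R) (t : nat -> nat -> R) : Rbar :=
  Rbar_glb (fun M => exists w a d, valid_walk n t w a d /\ M = MH n h w a d).

Definition edge_in (T : list (nat * nat)) (x y : nat) : Prop :=
  In (x, y) T \/ In (y, x) T.

Inductive reach (T : list (nat * nat)) : nat -> nat -> Prop :=
| reach_refl : forall x, reach T x x
| reach_step : forall x y z, reach T x y -> edge_in T y z -> reach T x z.

Definition spanning_tree (n : nat) (T : list (nat * nat)) : Prop :=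
  NoDup T /\
  (forall u v, In (u, v) T -> (u < v)%nat /\ (v < n)%nat) /\
  length T = (n - 1)%nat /\
  (forall v, (v < n)%nat -> reach T 0%nat v).

Definition tree_weight (t : nat -> nat -> R) (T : list (nat * nat)) : R :=
  fold_right (fun e acc => t (fst e) (snd e) + acc) 0 T.

Definition is_MST (n : nat) (t : nat -> nat -> R) (T : list (nat * nat)) : Prop :=
  spanning_tree n T /\
  forall T', spanning_tree n T' -> tree_weight t T <= tree_weight t T'.

Definition same_edge (e : nat * nat) (x y : nat) : bool :=
  ((x =? fst e) && (y =? snd e)) || ((x =? snd e) && (y =? fst e)).

Definition euler_tour (T : list (nat * nat)) (p : nat -> nat) (m : nat) : Prop :=
  (0 < m)%nat /\ p 0%nat = 0%nat /\ p m = 0%nat /\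
  (forall k, (k < m)%nat -> edge_in T (p k) (p (S k))) /\
  (forall e, In e T ->
     length (filter (fun k => same_edge e (p k) (p (S k))) (seq 0 m)) = 2%nat).

(* Algorithm 1: repeat the tour forever, without waiting *)
Definition alg_walk (p : nat -> nat) (m : nat) (k : nat) : nat := p (k mod m).

Fixpoint alg_time (t : nat -> nat -> R) (p : nat -> nat) (m : nat) (k : nat) : R :=
  match k with
  | O => 0
  | S k' => alg_time t p m k' + t (alg_walk p m k') (alg_walk p m (S k'))
  end.

From Pilot Require Import Defs.
From Stdlib Require Import Reals List Arith Lia Lra Classical.
From Coquelicot Require Import Coquelicot.
Import ListNotations.
Open Scope R_scope.

(* Let W be the weight of a minimum spanning tree. Any robot walk needs time at
   least W before it has visited every point, because the edges along which it
   first reaches new points form a spanning tree; so up to time W some bamboo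
   is never cut and grows to at least h_min * W, whence OPT >= h_min * W.
   Algorithm 1 passes every point once per tour, and a tour of the doubled
   tree lasts P <= 2W, so no bamboo stays uncut for longer than 2P <= 4W and
   MH <= 4 h_max W <= 4 (h_max / h_min) OPT. *)

Lemma Lub_Rbar_ge_elem (E : R -> Prop) (x : R) : E x -> Rbar_le x (Lub_Rbar E).
Proof. intros Hx. exact (proj1 (Lub_Rbar_correct E) x Hx). Qed.

Lemma Lub_Rbar_le_bound (E : R -> Prop) (b : R) :
  (forall y, E y -> y <= b) -> Rbar_le (Lub_Rbar E) b.
Proof. intros Hb. apply (proj2 (Lub_Rbar_correct E)). exact Hb. Qed.

Lemma real_Lub_Rbar_ge (E : R -> Prop) (x b : R) :
  E x -> (forall y, E y -> y <= b) -> x <= real (Lub_Rbar E).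
Proof.
  intros Hx Hb.
  pose proof (Lub_Rbar_ge_elem E x Hx) as Hlo.
  pose proof (Lub_Rbar_le_bound E b Hb) as Hhi.
  destruct (Lub_Rbar E); simpl in *; easy.
Qed.

Lemma real_Lub_Rbar_le (E : R -> Prop) (x b : R) :
  E x -> (forall y, E y -> y <= b) -> real (Lub_Rbar E) <= b.
Proof.
  intros Hx Hb.
  pose proof (Lub_Rbar_ge_elem E x Hx) as Hlo.
  pose proof (Lub_Rbar_le_bound E b Hb) as Hhi.
  destruct (Lub_Rbar E); simpl in *; easy.
Qed.

Lemma Rbar_le_of_forall_lt (z : R) (x : Rbar) :
  (forall y, y < z -> Rbar_le y x) -> Rbar_le z x.
Proof.
  intros H. destruct x as [r| |]; simpl; auto.
  - apply Rnot_lt_le. intros Hr.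
    specialize (H ((r + z) / 2) ltac:(lra)). simpl in H. lra.
  - exact (H (z - 1) ltac:(lra)).
Qed.

Lemma Rbar_le_scale (c y : R) (o : Rbar) :
  0 < c -> Rbar_le y o -> Rbar_le (c * y) (Rbar_mult c o).
Proof.
  intros Hc Ho. destruct o as [r| |]; simpl in *.
  - apply Rmult_le_compat_l; lra.
  - unfold Rbar_mult, Rbar_mult'.
    destruct (Rle_dec 0 c) as [Hc'|]; [|lra].
    destruct (Rle_lt_or_eq_dec 0 c Hc'); [exact I|lra].
  - contradiction.
Qed.

Lemma last_cut_ge w a d i tau s :
  0 <= tau -> s = 0 \/ (0 <= s <= tau /\ Defs.at_point w a d i s) ->
  s <= last_cut w a d i tau.
Proof.
  intros Htau Hs. apply (real_Lub_Rbar_ge _ s tau Hs).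
  intros y [-> | [Hy _]]; lra.
Qed.

Lemma last_cut_le w a d i tau : 0 <= tau -> last_cut w a d i tau <= tau.
Proof.
  intros Htau. apply (real_Lub_Rbar_le _ 0 tau (or_introl eq_refl)).
  intros y [-> | [Hy _]]; lra.
Qed.

Lemma last_cut_unvisited w a d i tau :
  (forall k, w k = i -> tau < a k) -> last_cut w a d i tau = 0.
Proof.
  intros Hun.
  assert (Hb : forall y, y = 0 \/ (0 <= y <= tau /\ Defs.at_point w a d i y) -> y <= 0).
  { intros y [-> | [Hy (k & Hk & Hak)]]; [lra|]. specialize (Hun k Hk). lra. }
  apply Rle_antisym.
  - exact (real_Lub_Rbar_le _ 0 0 (or_introl eq_refl) Hb).
  - exact (real_Lub_Rbar_ge _ 0 0 (or_introl eq_refl) Hb).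
Qed.

Lemma height_nonneg h w a d i tau :
  0 <= h i -> 0 <= tau -> 0 <= height h w a d i tau.
Proof.
  intros Hh Htau. pose proof (last_cut_le w a d i tau Htau).
  unfold height. apply Rmult_le_pos; lra.
Qed.

Lemma MH_ge_height n h w a d i tau :
  (i < n)%nat -> 0 <= tau -> Rbar_le (height h w a d i tau) (MH n h w a d).
Proof. intros Hi Htau. apply Lub_Rbar_ge_elem. exists i, tau. auto. Qed.

Lemma MH_le n h w a d (b : R) :
  (forall i tau, (i < n)%nat -> 0 <= tau -> height h w a d i tau <= b) ->
  Rbar_le (MH n h w a d) b.
Proof.
  intros Hb. apply Lub_Rbar_le_bound.
  intros x (i & tau & Hi & Htau & ->). auto.
Qed.

Lemma OPT_ge n h t (b : R) :
  (forall w a d, valid_walk n t w a d -> Rbar_le b (MH n h w a d)) ->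
  Rbar_le b (OPT n h t).
Proof.
  intros Hb. unfold OPT, Rbar_glb. destruct (Rbar_ex_glb _) as [l Hl]. change (Rbar_le b l).
  destruct Hl as [_ Hl].
  apply Hl. intros M (w & a & d & Hv & ->). auto.
Qed.

(** * Walks and the trees they grow *)

Lemma walk_arrival_step n t w a d :
  valid_walk n t w a d -> forall k, a k + t (w k) (w (S k)) <= a (S k).
Proof.
  intros (_ & _ & _ & _ & Had & Ha) k. rewrite Ha. specialize (Had k). lra.
Qed.

Lemma walk_travel_pos n h t w a d :
  valid_instance n h t -> valid_walk n t w a d -> forall k, 0 < t (w k) (w (S k)).
Proof.
  intros (_ & _ & _ & _ & Ht & _) (_ & _ & Hw & Hne & _) k. apply Ht; auto.
Qed.

Lemma walk_arrival_mono n h t w a d :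
  valid_instance n h t -> valid_walk n t w a d ->
  forall k k', (k <= k')%nat -> a k <= a k'.
Proof.
  intros Hi Hv k k' Hk. induction Hk as [|k' Hk IH]; [lra|].
  pose proof (walk_arrival_step _ _ _ _ _ Hv k').
  pose proof (walk_travel_pos _ _ _ _ _ _ Hi Hv k'). lra.
Qed.

Lemma exists_le_S (P : nat -> Prop) K :
  (exists k, (k <= S K)%nat /\ P k) <-> (exists k, (k <= K)%nat /\ P k) \/ P (S K).
Proof.
  split.
  - intros (k & Hk & Pk). destruct (Nat.eq_dec k (S K)) as [->|Hne]; [now right|].
    left. exists k. split; [lia|exact Pk].
  - intros [(k & Hk & Pk)|PK]; [exists k | exists (S K)]; split; auto; lia.
Qed.

Lemma exists_index_covering (w : nat -> nat) (a : nat -> R) (tau : R) (n : nat) :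
  (forall k k', (k <= k')%nat -> a k <= a k') -> a 0%nat <= tau ->
  (forall v, (v < n)%nat -> exists k, w k = v /\ a k <= tau) ->
  exists K, a K <= tau /\ forall v, (v < n)%nat -> exists k, (k <= K)%nat /\ w k = v.
Proof.
  intros Hmono H0. induction n as [|n IH]; intros Hall.
  - exists 0%nat. split; [exact H0 | intros; lia].
  - destruct IH as (K & HK & HKv); [intros v Hv; apply Hall; lia|].
    destruct (Hall n) as (k & Hk & Hak); [lia|].
    exists (Nat.max K k). split.
    + destruct (Nat.max_spec K k) as [[_ ->]|[_ ->]]; assumption.
    + intros v Hv. destruct (Nat.eq_dec v n) as [->|Hvn].
      * exists k. split; [lia|exact Hk].
      * destruct (HKv v) as (k' & Hk' & Hw); [lia|].
        exists k'. split; [lia|exact Hw].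
Qed.

Definition edge (x y : nat) : nat * nat := (Nat.min x y, Nat.max x y).

Lemma edge_cases x y : x <> y ->
  ((x < y)%nat /\ edge x y = (x, y)) \/ ((y < x)%nat /\ edge x y = (y, x)).
Proof.
  intros Hxy. unfold edge. destruct (proj1 (Nat.lt_gt_cases x y) Hxy) as [H|H].
  - left. rewrite Nat.min_l, Nat.max_r by lia. auto.
  - right. rewrite Nat.min_r, Nat.max_l by lia. auto.
Qed.

Lemma tree_weight_cons_edge t E x y :
  x <> y -> t y x = t x y -> tree_weight t (edge x y :: E) = t x y + tree_weight t E.
Proof.
  intros Hxy Hsym. destruct (edge_cases x y Hxy) as [[_ ->]|[_ ->]]; simpl.
  - reflexivity.
  - rewrite Hsym. reflexivity.
Qed.

Lemma reach_cons T e x y : reach T x y -> reach (e :: T) x y.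
Proof.
  induction 1 as [x|x y z _ IH Hyz]; [constructor|].
  apply reach_step with y; [exact IH|]. destruct Hyz; [left|right]; right; assumption.
Qed.

Definition rooted_tree (n : nat) (E : list (nat * nat)) (L : list nat) : Prop :=
  NoDup L /\ NoDup E /\ (forall x, In x L -> (x < n)%nat) /\
  (forall u v, In (u, v) E -> (u < v)%nat /\ In u L /\ In v L) /\
  S (length E) = length L /\ (forall x, In x L -> reach E 0%nat x).

Lemma rooted_tree_root n : (0 < n)%nat -> rooted_tree n [] [0%nat].
Proof.
  intros Hn. split; [constructor; [simpl; tauto|constructor]|].
  split; [constructor|]. split; [intros x [<-|[]]; exact Hn|].
  split; [intros u v []|]. split; [reflexivity|].
  intros x [<-|[]]. constructor.
Qed.

Lemma rooted_tree_grow n E L x y :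
  rooted_tree n E L -> In x L -> ~ In y L -> (y < n)%nat ->
  rooted_tree n (edge x y :: E) (y :: L).
Proof.
  intros (HL & HE & HLn & HEL & Hlen & Hr) Hx Hy Hyn.
  assert (Hxy : x <> y) by (intros ->; contradiction).
  assert (Hnew : edge_in (edge x y :: E) x y).
  { destruct (edge_cases x y Hxy) as [[_ ->]|[_ ->]]; [left|right]; left; reflexivity. }
  split; [constructor; assumption|].
  split.
  { constructor; [|exact HE]. intros Hin.
    destruct (edge_cases x y Hxy) as [[_ He]|[_ He]]; rewrite He in Hin;
      apply HEL in Hin; tauto. }
  split; [intros z [<-|Hz]; auto|].
  split.
  { intros u v [Heq|Hin].
    - destruct (edge_cases x y Hxy) as [[Hlt He]|[Hlt He]]; rewrite He in Heq;
        injection Heq as <- <-; simpl; auto.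
    - destruct (HEL u v Hin) as (Huv & Hu & Hv). simpl; auto. }
  split; [simpl; lia|].
  intros z [<-|Hz].
  - apply reach_step with x; [apply reach_cons, Hr, Hx | exact Hnew].
  - apply reach_cons, Hr, Hz.
Qed.

Lemma rooted_tree_spanning n E L :
  rooted_tree n E L -> (forall v, (v < n)%nat -> In v L) -> spanning_tree n E.
Proof.
  intros (HL & HE & HLn & HEL & Hlen & Hr) Hcov.
  assert (HlenL : length L = n).
  { apply Nat.le_antisymm.
    - rewrite <- (length_seq n 0). apply NoDup_incl_length; [exact HL|].
      intros z Hz. apply in_seq. specialize (HLn z Hz). lia.
    - rewrite <- (length_seq n 0) at 1. apply NoDup_incl_length; [apply seq_NoDup|].
      intros z Hz. apply in_seq in Hz. apply Hcov. lia. }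
  split; [exact HE|]. split; [|split; [lia|]].
  - intros u v Huv. destruct (HEL u v Huv) as (Huv' & _ & Hv). auto.
  - intros v Hv. apply Hr, Hcov, Hv.
Qed.

Lemma walk_prefix_tree n h t w a d :
  valid_instance n h t -> valid_walk n t w a d ->
  forall K, exists E L, rooted_tree n E L /\
    (forall x, In x L <-> exists k, (k <= K)%nat /\ w k = x) /\
    tree_weight t E <= a K.
Proof.
  intros Hi Hv. pose proof Hv as (Hw0 & Ha0 & Hwn & Hne & _).
  pose proof Hi as (Hn & _ & _ & _ & _ & Hts & _).
  induction K as [|K (E & L & Htree & HL & Hwt)].
  - exists [], [0%nat]. split; [apply rooted_tree_root; lia|]. split.
    + intros x. split.
      * intros [<- | []]. exists 0%nat. auto.
      * intros (k & Hk & <-). replace k with 0%nat by lia. left. auto.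
    + simpl. lra.
  - pose proof (walk_arrival_step _ _ _ _ _ Hv K) as Hstep.
    pose proof (walk_travel_pos _ _ _ _ _ _ Hi Hv K) as Htpos.
    assert (HxL : In (w K) L) by (apply HL; exists K; auto).
    destruct (in_dec Nat.eq_dec (w (S K)) L) as [HyL|HyL].
    + exists E, L. split; [exact Htree|]. split; [|lra].
      intros x. rewrite exists_le_S, <- HL. split; [now left|].
      intros [Hx| <-]; assumption.
    + exists (edge (w K) (w (S K)) :: E), (w (S K) :: L).
      split; [apply rooted_tree_grow; auto|]. split.
      * intros x. rewrite exists_le_S, <- HL. simpl. tauto.
      * rewrite tree_weight_cons_edge; [lra|apply not_eq_sym, Hne|].
        symmetry. apply Hts; auto.
Qed.

(** * The lower bound on OPT *)

Lemma MST_weight_le_cover_time n h t T w a d K :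
  valid_instance n h t -> is_MST n t T -> valid_walk n t w a d ->
  (forall v, (v < n)%nat -> exists k, (k <= K)%nat /\ w k = v) ->
  tree_weight t T <= a K.
Proof.
  intros Hi [_ Hmin] Hv Hcov.
  destruct (walk_prefix_tree _ _ _ _ _ _ Hi Hv K) as (E & L & Htree & HL & Hwt).
  assert (Hspan : spanning_tree n E).
  { apply (rooted_tree_spanning n E L Htree). intros v Hvn. apply HL, Hcov, Hvn. }
  specialize (Hmin E Hspan). lra.
Qed.

Lemma unvisited_point_before_MST_weight n h t T w a d tau :
  valid_instance n h t -> is_MST n t T -> valid_walk n t w a d ->
  0 <= tau < tree_weight t T -> exists v, (v < n)%nat /\ forall k, w k = v -> tau < a k.
Proof.
  intros Hi HT Hv Htau. apply NNPP. intros Hno.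
  assert (Hall : forall v, (v < n)%nat -> exists k, w k = v /\ a k <= tau).
  { intros v Hvn. apply NNPP. intros Hnv. apply Hno. exists v. split; [exact Hvn|].
    intros k Hk. apply Rnot_le_lt. intros Hak. apply Hnv. exists k. auto. }
  assert (Ha0 : a 0%nat = 0) by apply Hv.
  destruct (exists_index_covering w a tau n (walk_arrival_mono _ _ _ _ _ _ Hi Hv)
              ltac:(lra) Hall) as (K & HK & Hcov).
  pose proof (MST_weight_le_cover_time _ _ _ _ _ _ _ K Hi HT Hv Hcov). lra.
Qed.

Lemma MH_ge_MST_weight n h t T w a d :
  valid_instance n h t -> is_MST n t T -> valid_walk n t w a d ->
  Rbar_le (h (n - 1)%nat * tree_weight t T) (MH n h w a d).
Proof.
  intros Hi HT Hv. pose proof Hi as (Hn & Hhmono & Hhmin & _).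
  set (hmin := h (n - 1)%nat) in *.
  apply Rbar_le_of_forall_lt. intros y Hy.
  destruct (Rle_lt_dec y 0) as [Hy0|Hy0].
  - apply Rbar_le_trans with (Finite (height h w a d 0 0)).
    + assert (Hh0 : hmin <= h 0%nat) by (apply Hhmono; lia).
      pose proof (height_nonneg h w a d 0 0 ltac:(lra) (Rle_refl 0)).
      simpl. lra.
    + apply MH_ge_height; [lia|lra].
  - set (tau := y / hmin).
    assert (Hy' : y = hmin * tau) by (unfold tau; field; lra).
    assert (Htau : 0 <= tau < tree_weight t T).
    { assert (0 < tau) by (apply Rdiv_lt_0_compat; lra). nra. }
    destruct (unvisited_point_before_MST_weight _ _ _ _ _ _ _ _ Hi HT Hv Htau)
      as (v & Hvn & Hun).
    apply Rbar_le_trans with (Finite (height h w a d v tau));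
      [|apply MH_ge_height; [exact Hvn|lra]].
    simpl. unfold height. rewrite last_cut_unvisited by exact Hun.
    rewrite Rminus_0_r, Hy'. apply Rmult_le_compat_r; [lra|]. apply Hhmono; lia.
Qed.

Lemma OPT_ge_MST_weight n h t T :
  valid_instance n h t -> is_MST n t T ->
  Rbar_le (h (n - 1)%nat * tree_weight t T) (OPT n h t).
Proof.
  intros Hi HT. apply OPT_ge. intros w a d Hv. exact (MH_ge_MST_weight _ _ _ _ _ _ _ Hi HT Hv).
Qed.

Definition sum_list {A : Type} (l : list A) (f : A -> R) : R :=
  fold_right (fun x acc => f x + acc) 0 l.

Lemma sum_list_nil {A : Type} (f : A -> R) : sum_list [] f = 0.
Proof. reflexivity. Qed.

Lemma sum_list_cons {A : Type} (x : A) (l : list A) (f : A -> R) :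
  sum_list (x :: l) f = f x + sum_list l f.
Proof. reflexivity. Qed.

Lemma sum_list_app {A : Type} (l1 l2 : list A) (f : A -> R) :
  sum_list (l1 ++ l2) f = sum_list l1 f + sum_list l2 f.
Proof.
  induction l1 as [|x l1 IH]; cbn [app]; rewrite ?sum_list_nil, ?sum_list_cons, ?IH; lra.
Qed.

Lemma sum_list_le {A : Type} (l : list A) (f g : A -> R) :
  (forall x, In x l -> f x <= g x) -> sum_list l f <= sum_list l g.
Proof.
  induction l as [|x l IH]; intros H; rewrite ?sum_list_nil, ?sum_list_cons; [lra|].
  pose proof (H x (or_introl eq_refl)).
  pose proof (IH (fun y Hy => H y (or_intror Hy))). lra.
Qed.

Lemma sum_list_nonneg {A : Type} (l : list A) (f : A -> R) :
  (forall x, In x l -> 0 <= f x) -> 0 <= sum_list l f.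
Proof.
  induction l as [|x l IH]; intros H; rewrite ?sum_list_nil, ?sum_list_cons; [lra|].
  pose proof (H x (or_introl eq_refl)).
  pose proof (IH (fun y Hy => H y (or_intror Hy))). lra.
Qed.

Lemma sum_list_ge_term {A : Type} (l : list A) (f : A -> R) (x : A) :
  (forall y, In y l -> 0 <= f y) -> In x l -> f x <= sum_list l f.
Proof.
  induction l as [|y l IH]; intros Hnn Hx; [destruct Hx|]. rewrite sum_list_cons.
  pose proof (Hnn y (or_introl eq_refl)).
  assert (Hnn' : forall z, In z l -> 0 <= f z) by (intros z Hz; apply Hnn; right; exact Hz).
  destruct Hx as [<-|Hx].
  - pose proof (sum_list_nonneg l f Hnn'). lra.
  - pose proof (IH Hnn' Hx). lra.
Qed.

Lemma sum_list_add {A : Type} (l : list A) (f g : A -> R) :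
  sum_list l (fun x => f x + g x) = sum_list l f + sum_list l g.
Proof.
  induction l as [|x l IH]; rewrite ?sum_list_nil, ?sum_list_cons, ?IH; lra.
Qed.

Lemma sum_list_scale {A : Type} (l : list A) (f : A -> R) (c : R) :
  sum_list l (fun x => c * f x) = c * sum_list l f.
Proof.
  induction l as [|x l IH]; rewrite ?sum_list_nil, ?sum_list_cons, ?IH; lra.
Qed.

Lemma sum_list_swap {A B : Type} (l1 : list A) (l2 : list B) (f : A -> B -> R) :
  sum_list l1 (fun x => sum_list l2 (f x)) = sum_list l2 (fun y => sum_list l1 (fun x => f x y)).
Proof.
  induction l1 as [|x l1 IH].
  - rewrite sum_list_nil.
    induction l2 as [|y l2 IH2]; rewrite ?sum_list_nil, ?sum_list_cons; [reflexivity|].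
    rewrite sum_list_nil, <- IH2. ring.
  - rewrite sum_list_cons, IH, <- sum_list_add. reflexivity.
Qed.

Lemma sum_list_indicator {A : Type} (l : list A) (b : A -> bool) (c : R) :
  sum_list l (fun x => if b x then c else 0) = c * INR (length (filter b l)).
Proof.
  induction l as [|x l IH]; rewrite ?sum_list_nil, ?sum_list_cons; [simpl; lra|].
  rewrite IH. cbn [filter]. destruct (b x); cbn [length]; rewrite ?S_INR; lra.
Qed.

(** * Euler tours of a spanning tree *)

Lemma spanning_tree_edge n T u v :
  spanning_tree n T -> edge_in T u v -> (u < n)%nat /\ (v < n)%nat /\ u <> v.
Proof. intros (_ & HT & _) [Huv|Huv]; apply HT in Huv; lia. Qed.

Lemma tree_edge_travel_pos n h t T u v :
  valid_instance n h t -> spanning_tree n T -> edge_in T u v -> 0 < t u v.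
Proof.
  intros (_ & _ & _ & _ & Ht & _) HT Huv.
  destruct (spanning_tree_edge n T u v HT Huv) as (Hu & Hv & Hne). auto.
Qed.

Lemma same_edge_true e x y :
  same_edge e x y = true -> (x = fst e /\ y = snd e) \/ (x = snd e /\ y = fst e).
Proof.
  unfold same_edge. rewrite Bool.orb_true_iff, !Bool.andb_true_iff, !Nat.eqb_eq. auto.
Qed.

Lemma euler_tour_traverses T p m e :
  euler_tour T p m -> In e T -> exists k, (k < m)%nat /\ same_edge e (p k) (p (S k)) = true.
Proof.
  intros (_ & _ & _ & _ & Htwice) He. specialize (Htwice e He).
  destruct (filter (fun k => same_edge e (p k) (p (S k))) (seq 0 m)) as [|k l] eqn:Hf;
    [discriminate|].
  assert (Hk : In k (filter (fun k => same_edge e (p k) (p (S k))) (seq 0 m)))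
    by (rewrite Hf; left; reflexivity).
  apply filter_In in Hk as [Hk Hs]. apply in_seq in Hk. exists k. split; [lia|exact Hs].
Qed.

Lemma reach_edge_endpoint T x y :
  reach T x y -> x <> y -> exists e, In e T /\ (fst e = y \/ snd e = y).
Proof.
  intros Hr Hxy. destruct Hr as [x|x y z _ [Hz|Hz]];
    [contradiction | exists (y, z) | exists (z, y)]; simpl; auto.
Qed.

Lemma euler_tour_visits n T p m i :
  spanning_tree n T -> euler_tour T p m -> (i < n)%nat -> exists j, (j < m)%nat /\ p j = i.
Proof.
  intros (_ & _ & _ & Hreach) Htour Hi.
  pose proof Htour as (Hm & Hp0 & Hpm & _).
  assert (Hvisit : forall k, (k <= m)%nat -> exists j, (j < m)%nat /\ p j = p k).
  { intros k Hk. destruct (Nat.eq_dec k m) as [->|Hkm].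
    - exists 0%nat. split; [lia|congruence].
    - exists k. split; [lia|reflexivity]. }
  destruct (Nat.eq_dec i 0) as [->|Hi0]; [exists 0%nat; auto|].
  destruct (reach_edge_endpoint T 0 i (Hreach i Hi) (not_eq_sym Hi0)) as (e & He & Hei).
  destruct (euler_tour_traverses T p m e Htour He) as (k & Hk & Hs).
  assert (Hends : i = p k \/ i = p (S k))
    by (destruct (same_edge_true e _ _ Hs); destruct Hei; intuition congruence).
  destruct Hends as [->| ->]; apply Hvisit; lia.
Qed.

Lemma euler_tour_length_le n h t T p m :
  valid_instance n h t -> spanning_tree n T -> euler_tour T p m ->
  sum_list (seq 0 m) (fun k => t (p k) (p (S k))) <= 2 * tree_weight t T.
Proof.
  intros Hi HT (_ & _ & _ & Hedges & Htwice).
  pose proof Hi as (_ & _ & _ & _ & _ & Hts & _).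
  set (cost k e := if same_edge e (p k) (p (S k)) then t (fst e) (snd e) else 0).
  (* Double counting: each step is charged to the tree edge it traverses, and
     every tree edge is traversed exactly twice. *)
  assert (Hcost : forall k, (k < m)%nat -> t (p k) (p (S k)) <= sum_list T (cost k)).
  { intros k Hk.
    assert (Hnn : forall e, In e T -> 0 <= cost k e).
    { intros [u v] Huv. unfold cost. destruct same_edge; [|lra].
      apply Rlt_le. eapply tree_edge_travel_pos; [exact Hi|exact HT|left; exact Huv]. }
    destruct (Hedges k Hk) as [Hin|Hin];
      refine (Rle_trans _ _ _ _ (sum_list_ge_term _ _ _ Hnn Hin));
      unfold cost, same_edge; simpl; rewrite !Nat.eqb_refl, ?Bool.orb_true_r; simpl.
    - lra.
    - destruct (spanning_tree_edge n T _ _ HT (or_intror Hin)) as (H1 & H2 & H3).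
      rewrite Hts by auto. lra. }
  apply Rle_trans with (sum_list (seq 0 m) (fun k => sum_list T (cost k))).
  { apply sum_list_le. intros k Hk. apply in_seq in Hk. apply Hcost. lia. }
  rewrite sum_list_swap.
  replace (2 * tree_weight t T) with (sum_list T (fun e => 2 * t (fst e) (snd e)))
    by (rewrite sum_list_scale; reflexivity).
  apply sum_list_le. intros e He. unfold cost.
  rewrite (sum_list_indicator _ (fun k => same_edge e (p k) (p (S k)))), Htwice by exact He.
  simpl. lra.
Qed.

(** * The schedule of Algorithm 1 *)

Lemma alg_walk_periodic p m k q : alg_walk p m (k + q * m) = alg_walk p m k.
Proof. unfold alg_walk. rewrite Nat.Div0.mod_add. reflexivity. Qed.

Lemma alg_walk_tour p m k : p m = p 0%nat -> (k <= m)%nat -> alg_walk p m k = p k.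
Proof.
  intros Hpm Hk. unfold alg_walk. destruct (Nat.eq_dec k m) as [->|Hkm].
  - rewrite Nat.Div0.mod_same. congruence.
  - rewrite Nat.mod_small by lia. reflexivity.
Qed.

Lemma alg_step_tree_edge T p m k :
  euler_tour T p m -> edge_in T (alg_walk p m k) (alg_walk p m (S k)).
Proof.
  intros (Hm & Hp0 & Hpm & Hedges & _).
  pose proof (Nat.div_mod_eq k m) as Hdiv.
  pose proof (Nat.mod_upper_bound k m ltac:(lia)) as Hr.
  replace (S k) with (S (k mod m) + (k / m) * m)%nat by nia.
  rewrite alg_walk_periodic, (alg_walk_tour p m (S (k mod m))) by (congruence || lia).
  exact (Hedges _ Hr).
Qed.

Lemma alg_time_mono t p m k k' :
  (forall j, 0 <= t (alg_walk p m j) (alg_walk p m (S j))) ->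
  (k <= k')%nat -> alg_time t p m k <= alg_time t p m k'.
Proof.
  intros Hstep Hk. induction Hk as [|k' Hk IH]; [lra|].
  cbn [alg_time]. specialize (Hstep k'). lra.
Qed.

Lemma alg_time_periodic t p m j q :
  alg_time t p m (j + q * m) = alg_time t p m j + INR q * alg_time t p m m.
Proof.
  assert (Hperiod : forall k, alg_time t p m (k + m) = alg_time t p m k + alg_time t p m m).
  { induction k as [|k IH]; [simpl; lra|].
    cbn [Nat.add alg_time]. rewrite IH.
    replace (S (k + m)) with (S k + 1 * m)%nat by lia.
    replace (k + m)%nat with (k + 1 * m)%nat by lia.
    rewrite !alg_walk_periodic. lra. }
  induction q as [|q IH]; [rewrite Nat.add_0_r; simpl; lra|].
  replace (j + S q * m)%nat with (j + q * m + m)%nat by lia.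
  rewrite Hperiod, IH, S_INR. lra.
Qed.

Lemma alg_time_tour t p m k : p m = p 0%nat -> (k <= m)%nat ->
  alg_time t p m k = sum_list (seq 0 k) (fun j => t (p j) (p (S j))).
Proof.
  intros Hpm. induction k as [|k IH]; intros Hk; [reflexivity|].
  cbn [alg_time]. rewrite IH, seq_S, sum_list_app, !alg_walk_tour by (auto || lia).
  simpl. lra.
Qed.

Lemma alg_period_le n h t T p m :
  valid_instance n h t -> spanning_tree n T -> euler_tour T p m ->
  alg_time t p m m <= 2 * tree_weight t T.
Proof.
  intros Hi HT Htour. pose proof Htour as (_ & Hp0 & Hpm & _).
  rewrite alg_time_tour by (congruence || lia).
  exact (euler_tour_length_le _ _ _ _ _ _ Hi HT Htour).
Qed.

Lemma alg_last_cut_gap n h t T p m i tau :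
  valid_instance n h t -> spanning_tree n T -> euler_tour T p m -> (i < n)%nat -> 0 <= tau ->
  tau - last_cut (alg_walk p m) (alg_time t p m) (alg_time t p m) i tau
    <= 2 * alg_time t p m m.
Proof.
  intros Hi HT Htour Hin Htau.
  set (P := alg_time t p m m).
  assert (Hstep : forall k, 0 < t (alg_walk p m k) (alg_walk p m (S k)))
    by (intros k; exact (tree_edge_travel_pos _ _ _ _ _ _ Hi HT (alg_step_tree_edge _ _ _ k Htour))).
  assert (Hmono : forall k k', (k <= k')%nat -> alg_time t p m k <= alg_time t p m k')
    by (intros k k'; apply alg_time_mono; intros j; apply Rlt_le, Hstep).
  pose proof Htour as (Hm & Hp0 & Hpm & _).
  assert (HP : 0 < P).
  { pose proof (Hmono 1%nat m ltac:(lia)). pose proof (Hstep 0%nat).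
    cbn [alg_time] in *. unfold P. lra. }
  destruct (euler_tour_visits n T p m i HT Htour Hin) as (j & Hj & Hpj).
  assert (Htj : 0 <= alg_time t p m j <= P)
    by (split; [apply (Hmono 0%nat j) | apply Hmono]; lia).
  destruct (nfloor_ex (tau / P)) as [N HN]; [apply Rdiv_le_0_compat; lra|].
  assert (HNP : INR N * P <= tau < INR N * P + P).
  { assert (Htq : tau = tau / P * P) by (field; lra). nra. }
  destruct N as [|N].
  - pose proof (last_cut_ge (alg_walk p m) (alg_time t p m) (alg_time t p m) i tau 0
                  Htau (or_introl eq_refl)).
    simpl in HNP. lra.
  - (* The visit of [v_i] during the previous full period. *)
    set (s := alg_time t p m (j + N * m)).
    assert (Hs : s = alg_time t p m j + INR N * P) by apply alg_time_periodic.
    rewrite S_INR, Rmult_plus_distr_r, Rmult_1_l in HNP.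
    assert (HNn : 0 <= INR N * P) by (apply Rmult_le_pos; [apply pos_INR|lra]).
    assert (Hcut : s <= last_cut (alg_walk p m) (alg_time t p m) (alg_time t p m) i tau).
    { apply last_cut_ge; [exact Htau|]. right. split; [split; lra|].
      exists (j + N * m)%nat. split; [|split; apply Rle_refl].
      rewrite alg_walk_periodic, alg_walk_tour by (congruence || lia). exact Hpj. }
    lra.
Qed.

Lemma alg_MH_le n h t T p m :
  valid_instance n h t -> spanning_tree n T -> euler_tour T p m ->
  Rbar_le (MH n h (alg_walk p m) (alg_time t p m) (alg_time t p m))
          (h 0%nat * (2 * alg_time t p m m)).
Proof.
  intros Hi HT Htour. pose proof Hi as (_ & Hhmono & Hhmin & _).
  apply MH_le. intros i tau Hin Htau. unfold height.
  pose proof (alg_last_cut_gap _ _ _ _ _ _ i tau Hi HT Htour Hin Htau).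
  pose proof (last_cut_le (alg_walk p m) (alg_time t p m) (alg_time t p m) i tau Htau).
  assert (h (n - 1)%nat <= h i <= h 0%nat) by (split; apply Hhmono; lia).
  apply Rmult_le_compat; lra.
Qed.

Theorem theorem4 :
  exists c : R, 0 < c /\
  forall (n : nat) (h : nat -> R) (t : nat -> nat -> R)
         (T : list (nat * nat)) (p : nat -> nat) (m : nat),
    valid_instance n h t ->
    is_MST n t T ->
    euler_tour T p m ->
    Rbar_le (MH n h (alg_walk p m) (alg_time t p m) (alg_time t p m))
            (Rbar_mult (Finite (c * (h 0%nat / h (n - 1)%nat))) (OPT n h t)).
Proof.
  exists 4. split; [lra|]. intros n h t T p m Hi HT Htour.
  pose proof Hi as (_ & _ & Hhmin & Hh0 & _).
  assert (Hspan : spanning_tree n T) by apply HT.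
  apply Rbar_le_trans with (Finite (h 0%nat * (2 * alg_time t p m m)));
    [exact (alg_MH_le _ _ _ _ _ _ Hi Hspan Htour)|].
  apply Rbar_le_trans with
    (Finite (4 * (h 0%nat / h (n - 1)%nat) * (h (n - 1)%nat * tree_weight t T))).
  - simpl. pose proof (alg_period_le _ _ _ _ _ _ Hi Hspan Htour).
    replace (4 * (h 0%nat / h (n - 1)%nat) * (h (n - 1)%nat * tree_weight t T))
      with (4 * h 0%nat * tree_weight t T) by (field; lra).
    nra.
  - apply Rbar_le_scale; [|exact (OPT_ge_MST_weight _ _ _ _ Hi HT)].
    apply Rmult_lt_0_compat; [lra|apply Rdiv_lt_0_compat; lra].
Qed.
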